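(* Let indices range over $\{1,\dots,5\}$. Let real numbers $\alpha^{ab}_i$ be given for all pairwise distinct $a,b,i$. Let nonnegative numbers $k^a_{ij}=k^a_{ji}$ be given for pairwise distinct $a,i,j$, and numbers $j_{ai}=j_{ia}$ for $a\ne i$, such that $$\sum_{j\notin\{a,i\}}k^a_{ij}=2j_{ai}.$$ Define $$\alpha^{ai}_{jk}=\alpha^{ai}_j-\alpha^{ai}_k,\qquad \xi^{ab}_i=\alpha^{ab}_i+\alpha^{ba}_i,\qquad \xi^{ij}=\frac13\sum_{k\notin\{i,j\}}\xi^{ij}_k,\qquad \alpha^a_{ij}=\frac16\sum_{b\notin\{i,j,a\}}\big(\alpha^{ai}_{jb}+\alpha^{aj}_{ib}\big),$$ and let $$I=\frac12\sum_{a}\sum_{\substack{i<j\\ i,j\ne a}}k^a_{ij}\big(\alpha^{aj}_i+\alpha^{ai}_j\big)$$ be the imaginary part of the on-shell action. Then $I$ equals the twisted-geometry generalization of the Regge action: $$I=S_{\mathbb T}:=\sum_{i<j}j_{ij}\,\xi^{ij}+\sum_a\sum_{\substack{i<j\\ i,j\ne a}}k^a_{ij}\,\alpha^a_{ij}.$$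
   Context: Geometric interpretation (not needed for the identity): $a=1,\dots,5$ label the tetrahedra of a 4-simplex, and face $(ai)$ of tetrahedron $a$ is glued to face $(ia)$ of tetrahedron $i$. The number $2j_{ai}$ is the area of that shared triangle. The integers $k^a_{ij}$ label the discrete intertwiner at tetrahedron $a$. The angle $\alpha^{ab}_i$ is the angle, in face $b$ of tetrahedron $a$, between the edge $(bi)$ and a reference frame vector. The on-shell value of the action governing the large-spin asymptotics of the 4-simplex amplitude has imaginary part $I$. *)

(* Indices {1,...,5} are represented by 'I_5 = {0,...,4}. *)
From mathcomp Require Import all_boot all_order all_algebra.
Set Implicit Arguments. Unset Strict Implicit. Unset Printing Implicit Defensive.
Import Order.TTheory GRing.Theory Num.Theory.
Local Open Scope ring_scope.

Section Defs.
Variable R : realFieldType.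
Implicit Types (al k : 'I_5 -> 'I_5 -> 'I_5 -> R) (jj : 'I_5 -> 'I_5 -> R).

(* alpha^{ai}_{jk} = alpha^{ai}_j - alpha^{ai}_k ; al a b i stands for alpha^{ab}_i *)
Definition alpha2 al (a i j k : 'I_5) : R := al a i j - al a i k.

Definition xi3 al (a b i : 'I_5) : R := al a b i + al b a i.

Definition xi2 al (i j : 'I_5) : R :=
  3^-1 * \sum_(k : 'I_5 | (k != i) && (k != j)) xi3 al i j k.

Definition alphaA al (a i j : 'I_5) : R :=
  6^-1 * \sum_(b : 'I_5 | [&& b != i, b != j & b != a])
           (alpha2 al a i j b + alpha2 al a j i b).

Definition ImAction al k : R :=
  2^-1 * \sum_(a : 'I_5) \sum_(i : 'I_5) \sum_(j : 'I_5 | [&& (i < j)%N, i != a & j != a])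
           k a i j * (al a j i + al a i j).

Definition ST al k jj : R :=
  \sum_(i : 'I_5) \sum_(j : 'I_5 | (i < j)%N) jj i j * xi2 al i j
  + \sum_(a : 'I_5) \sum_(i : 'I_5) \sum_(j : 'I_5 | [&& (i < j)%N, i != a & j != a])
           k a i j * alphaA al a i j.

End Defs.

From mathcomp Require Import all_boot all_order all_algebra.
From mathcomp Require Import ring.
Set Implicit Arguments. Unset Strict Implicit. Unset Printing Implicit Defensive.
Import GRing.Theory.
Local Open Scope ring_scope.

(* By the symmetry of k^a_{ij} and of j_{ij}, both sides become sums over ordered
   triples (a, i, j) of pairwise distinct indices weighted by k^a_{ij}.  There I
   contributes (1/2) α^{ai}_j.  On the other side, j_{ai} = (1/2) Σ_j k^a_{ij} turns
   the ξ-term into (1/6) Σ_{c ∉ {a,i}} α^{ai}_c, and the α^a_{ij}-term contributes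
   (1/6) Σ_{b ∉ {a,i,j}} (α^{ai}_j - α^{ai}_b); the two add up to
   (1/6) (5 - 2) α^{ai}_j = (1/2) α^{ai}_j. *)

Lemma sum_ltn_pairs_sym (R : nmodType) n (P : rel 'I_n) (F : 'I_n -> 'I_n -> R) :
  symmetric P ->
  \sum_(i : 'I_n) \sum_(j : 'I_n | (i < j)%N && P i j) (F i j + F j i)
  = \sum_(i : 'I_n) \sum_(j : 'I_n | (i != j) && P i j) F i j.
Proof.
move=> symP; under eq_bigr do rewrite big_split; rewrite big_split /=.
rewrite [X in _ + X](exchange_big_dep xpredT) //= -big_split /=.
apply: eq_bigr => i _; rewrite [RHS](bigID (fun j : 'I_n => (i < j)%N)) /=.
congr (_ + _); apply: eq_bigl => j; rewrite -val_eqE /=.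
- by case: ltngtP => _; rewrite /= ?andbT ?andbF.
- by rewrite symP; case: ltngtP => _; rewrite /= ?andbT ?andbF.
Qed.

Section ThreeDistinct.
Variables (T : finType) (a i j : T).
Hypothesis aij : [&& a != i, a != j & i != j].

Lemma cards3_distinct : #|[set i; j; a]| = 3%N.
Proof.
case/and3P: aij => ai aj ij.
by rewrite -setUA cardsU1 cards2 in_set2 negb_or ij (eq_sym i) ai (eq_sym j) aj.
Qed.

Lemma card_compl3 : #|[pred b | [&& b != i, b != j & b != a]]| = (#|T| - 3)%N.
Proof.
have := cardC [set i; j; a]; rewrite cards3_distinct => <-; rewrite addKn.
by apply: eq_card => b; rewrite !inE -orbA !negb_or.
Qed.

Lemma sum_compl2_add_compl3_sub (R : zmodType) (x : T -> R) :
  \sum_(c | (c != a) && (c != i)) x c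
    + \sum_(b | [&& b != i, b != j & b != a]) (x j - x b) = x j *+ (#|T| - 2).
Proof.
case/and3P: (aij) => ai aj ij.
rewrite (bigD1 j) /=; last by rewrite eq_sym aj eq_sym ij.
rewrite sumrB sumr_const card_compl3.
rewrite (eq_bigl [pred b | [&& b != i, b != j & b != a]]) => [|b]; last first.
  by rewrite /= -andbA andbC -andbA.
rewrite -addrA subrKC -mulrS subnSK //.
by have := max_card [set i; j; a]; rewrite cards3_distinct.
Qed.

End ThreeDistinct.

Section OrderedTriples.
Variables (R : realFieldType) (al k : 'I_5 -> 'I_5 -> 'I_5 -> R) (jj : 'I_5 -> 'I_5 -> R).
Hypothesis k_sym : forall a i j : 'I_5, [&& a != i, a != j & i != j] -> k a i j = k a j i.

Lemma ImAction_ordered :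
  ImAction al k
  = \sum_(a : 'I_5) \sum_(i : 'I_5) \sum_(j : 'I_5 | (i != j) && ((i != a) && (j != a)))
      2^-1 * (k a i j * al a i j).
Proof.
rewrite /ImAction mulr_sumr; apply: eq_bigr => a _.
rewrite -(@sum_ltn_pairs_sym _ _ (fun i j : 'I_5 => (i != a) && (j != a))
           (fun i j => 2^-1 * (k a i j * al a i j))); last by move=> i j; rewrite andbC.
rewrite mulr_sumr; apply: eq_bigr => i _; rewrite mulr_sumr; apply: eq_bigr => j.
case/and3P=> ij ia ja.
have aij : [&& a != i, a != j & i != j] by rewrite !(eq_sym a) ia ja -val_eqE neq_ltn ij.
by rewrite -(k_sym aij) -!mulrDr addrC.
Qed.

Lemma ST_vertex_term_ordered :
  \sum_(a : 'I_5) \sum_(i : 'I_5) \sum_(j : 'I_5 | [&& (i < j)%N, i != a & j != a])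
      k a i j * alphaA al a i j
  = \sum_(a : 'I_5) \sum_(i : 'I_5) \sum_(j : 'I_5 | (i != j) && ((i != a) && (j != a)))
      6^-1 * (k a i j * \sum_(b | [&& b != i, b != j & b != a]) alpha2 al a i j b).
Proof.
apply: eq_bigr => a _.
rewrite -(@sum_ltn_pairs_sym _ _ (fun i j : 'I_5 => (i != a) && (j != a))
  (fun i j => 6^-1 * (k a i j * \sum_(b | [&& b != i, b != j & b != a]) alpha2 al a i j b)));
  last by move=> i j; rewrite andbC.
apply: eq_bigr => i _; apply: eq_bigr => j /and3P[ij ia ja].
have aij : [&& a != i, a != j & i != j] by rewrite !(eq_sym a) ia ja -val_eqE neq_ltn ij.
rewrite -(k_sym aij).
rewrite [X in _ = _ + _ * (_ * X)](eq_bigl (fun b => [&& b != i, b != j & b != a])).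
  by rewrite /alphaA big_split /= mulrCA !mulrDr.
by move=> b; rewrite andbCA.
Qed.

Hypothesis jj_sym : forall a i : 'I_5, a != i -> jj a i = jj i a.
Hypothesis k_sum : forall a i : 'I_5, a != i ->
  \sum_(j : 'I_5 | (j != a) && (j != i)) k a i j = 2 * jj a i.

Lemma ST_pair_term_ordered :
  \sum_(i : 'I_5) \sum_(j : 'I_5 | (i < j)%N) jj i j * xi2 al i j
  = \sum_(a : 'I_5) \sum_(i : 'I_5) \sum_(j : 'I_5 | (i != j) && ((i != a) && (j != a)))
      6^-1 * (k a i j * \sum_(c | (c != a) && (c != i)) al a i c).
Proof.
transitivity (\sum_(i : 'I_5) \sum_(j : 'I_5 | (i != j) && true)
                3^-1 * (jj i j * \sum_(c | (c != i) && (c != j)) al i j c)).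
  rewrite -(@sum_ltn_pairs_sym _ _ (fun _ _ => true)
    (fun i j => 3^-1 * (jj i j * \sum_(c | (c != i) && (c != j)) al i j c))) //.
  apply: eq_bigr => i _.
  rewrite (eq_bigl (fun j : 'I_5 => (i < j)%N && true)) => [|j]; last by rewrite andbT.
  apply: eq_bigr => j /andP[ij _]; have nij : i != j by rewrite -val_eqE neq_ltn ij.
  rewrite -(jj_sym nij).
  rewrite [X in _ = _ + _ * (_ * X)](eq_bigl (fun c => (c != i) && (c != j))).
    by rewrite /xi2 /xi3 big_split /= mulrCA !mulrDr.
  by move=> c; rewrite andbC.
apply: eq_bigr => a _; rewrite big_mkcond; apply: eq_bigr => i _.
case: (eqVneq a i) => [<-|ai] /=.
  by rewrite big_pred0 // => j; rewrite andbF.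
rewrite -mulr_sumr -mulr_suml.
rewrite [X in _ = _ * (X * _)](eq_bigl (fun j => (j != a) && (j != i))) => [|j]; last first.
  by rewrite andbC (eq_sym i).
by rewrite k_sum //; field.
Qed.

End OrderedTriples.

Theorem mainTheorem14 (R : realFieldType)
    (al k : 'I_5 -> 'I_5 -> 'I_5 -> R) (jj : 'I_5 -> 'I_5 -> R) :
  (forall a i j : 'I_5, [&& a != i, a != j & i != j] -> 0 <= k a i j) ->
  (forall a i j : 'I_5, [&& a != i, a != j & i != j] -> k a i j = k a j i) ->
  (forall a i : 'I_5, a != i -> jj a i = jj i a) ->
  (forall a i : 'I_5, a != i ->
     \sum_(j : 'I_5 | (j != a) && (j != i)) k a i j = 2 * jj a i) ->
  ImAction al k = ST al k jj.
Proof.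
move=> _ k_sym jj_sym k_sum.
rewrite (ImAction_ordered al k_sym) /ST (ST_pair_term_ordered al jj_sym k_sum).
rewrite (ST_vertex_term_ordered al k_sym).
rewrite -big_split; apply: eq_bigr => a _; rewrite -big_split; apply: eq_bigr => i _.
rewrite -big_split /=; apply: eq_bigr => j /andP[ij /andP[ia ja]].
have aij : [&& a != i, a != j & i != j] by rewrite !(eq_sym a) ia ja ij.
rewrite -!mulrDr (sum_compl2_add_compl3_sub aij) card_ord.
rewrite -[al a i j *+ _]mulr_natr; change (5 - 2)%N with 3%N.
by field.
Qed.
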